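(* (a) Let $n\ge1$ and $x\in\overline{L_n}$. Then there are ultrafilters $x_i\in\overline{L_i}$, $1\le i\le n-1$, such that $1\,\tilde{\mid}\,x_1\,\tilde{\mid}\,x_2\cdots\tilde{\mid}\,x_{n-1}\,\tilde{\mid}\,x$. (b) For any ultrafilter $x_m\in\overline{L_m}$ there exists a sequence $\langle x_n: n\ge m\rangle$ with $x_n\in\overline{L_n}$ such that $x_m\,\tilde{\mid}\,x_n$ for all $n\ge m$.
   Context: $\mathbb{N}=\{1,2,3,\dots\}$; $\beta\mathbb{N}$ is the set of ultrafilters on $\mathbb{N}$ (Stone–Čech compactification, naturals identified with principal ultrafilters). For $A\subseteq\mathbb{N}$, $\overline{A}=\{x\in\beta\mathbb{N}:A\in x\}$. $P$ is the set of primes, $L_0=\{1\}$, $L_n=\{a_1\cdots a_n:a_i\in P\}$. For $x,y\in\beta\mathbb{N}$, $x\,\tilde{\mid}\,y$ iff for every $A\in x$ the set $\{k\in\mathbb{N}:\exists a\in A,\ a\mid k\}$ belongs to $y$. *)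

From mathcomp Require Import all_boot.
Set Implicit Arguments. Unset Strict Implicit. Unset Printing Implicit Defensive.

(* Subsets of N = {1,2,...} are modelled as predicates on nat; an ultrafilter
   on N is a family of such predicates that is an ultrafilter on nat
   containing the set of positive naturals (so it is concentrated on N). *)
Definition natset := nat -> Prop.

Definition is_ultrafilter (x : natset -> Prop) : Prop :=
  [/\ x (fun n => 0 < n),
      ~ x (fun _ => False),
      (forall A B : natset, x A -> (forall n, A n -> B n) -> x B),
      (forall A B : natset, x A -> x B -> x (fun n => A n /\ B n)) &
      (forall A : natset, x A \/ x (fun n => ~ A n))].

Definition principal (a : nat) : natset -> Prop := fun A => A a.

Definition L (n : nat) : natset :=
  fun k => exists s : seq nat, [/\ size s = n, all prime s & k = \prod_(p <- s) p].

Definition divup (A : natset) : natset :=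
  fun k => 0 < k /\ exists a, A a /\ a %| k.

Definition tdiv (x y : natset -> Prop) : Prop :=
  forall A : natset, x A -> y (divup A).

(* The image of an ultrafilter y under a map f : N -> N is again an ultrafilter, and it
   lies below y in the divisibility order whenever f k divides k (above y whenever k
   divides f k).  Dividing k by its least prime factor maps L_(i+1) into L_i, so the
   images of x under the iterates of this map form the chain in (a); doubling maps L_i
   into L_(i+1), so the images of x_m under k |-> 2^j k give the sequence in (b). *)
From mathcomp Require Import all_boot zify.

Set Implicit Arguments.
Unset Strict Implicit.

(* [push f y] is the value at y of the continuous extension of f to beta N. *)
Definition push (f : nat -> nat) (y : natset -> Prop) : natset -> Prop :=
  fun A => y (fun k => A (f k)).

Section Ultrafilter.

Variable y : natset -> Prop.
Hypothesis y_uf : is_ultrafilter y.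

Lemma uf_mono (A B : natset) : y A -> (forall k, A k -> B k) -> y B.
Proof. by case: y_uf => _ _ mono _ _; exact: mono. Qed.

Lemma uf_posI (A : natset) : y A -> y (fun k => 0 < k /\ A k).
Proof. by case: y_uf => pos _ _ meet _; exact: meet. Qed.

Lemma push_ultrafilter f : {homo f : k / 0 < k} -> is_ultrafilter (push f y).
Proof.
case: y_uf => pos empty mono meet compl f_pos; split; rewrite /push //.
- by apply: mono pos _ => k /f_pos.
- by move=> A B yA AB; apply: mono yA _ => k /AB.
- by move=> A B; exact: meet.
Qed.

Lemma tdiv_principal1 : tdiv (principal 1) y.
Proof.
move=> A A1; case: y_uf => pos _ mono _ _; apply: mono pos _ => k k_gt0.
by split=> //; exists 1; rewrite dvd1n.
Qed.

Lemma push_tdiv f : (forall k, f k %| k) -> tdiv (push f y) y.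
Proof.
move=> f_dvd A /uf_posI yA; apply: uf_mono yA _ => k [k_gt0 Afk].
by split=> //; exists (f k).
Qed.

Lemma tdiv_push f : {homo f : k / 0 < k} -> (forall k, k %| f k) ->
  tdiv y (push f y).
Proof.
move=> f_pos dvd_f A /uf_posI yA; apply: uf_mono yA _ => k [k_gt0 Ak].
by split; [exact: f_pos | exists k].
Qed.

End Ultrafilter.

Lemma prime_dvd_prod_mem p s :
  prime p -> all prime s -> p %| \prod_(q <- s) q -> p \in s.
Proof.
move=> p_pr s_pr; rewrite Euclid_dvd_prod // big_has => /hasP[q sq].
by rewrite dvdn_prime2 //; [move/eqP->|exact: (allP s_pr)].
Qed.

Lemma L_gt1 i k : L i.+1 k -> 1 < k.
Proof.
case=> [[|q s] [//= _ /andP[q_pr s_pr] ->]]; rewrite big_cons.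
have : 0 < \prod_(r <- s) r.
  by rewrite big_seq_cond prodn_cond_gt0 // => r /andP[/(allP s_pr)/prime_gt0].
by move: (prime_gt1 q_pr); nia.
Qed.

Definition divpdiv (k : nat) : nat := k %/ pdiv k.

Lemma divpdiv_gt0 k : 0 < k -> 0 < divpdiv k.
Proof. by move=> k_gt0; rewrite divn_gt0 ?pdiv_gt0 // dvdn_leq ?pdiv_dvd. Qed.

Lemma dvdn_divpdiv k : divpdiv k %| k.
Proof. by apply/dvdnP; exists (pdiv k); rewrite mulnC divnK ?pdiv_dvd. Qed.

Lemma L_divpdiv i k : L i.+1 k -> L i (divpdiv k).
Proof.
move=> Lk; have p_pr : prime (pdiv k) := pdiv_prime (L_gt1 Lk).
case: Lk => s [size_s s_pr def_k].
have sp : pdiv k \in s by apply: prime_dvd_prod_mem; rewrite // -def_k pdiv_dvd.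
exists (rem (pdiv k) s); split.
- by rewrite size_rem // size_s.
- by apply/allP => q /mem_rem; exact: (allP s_pr).
- by rewrite /divpdiv {1}def_k (big_rem _ sp) mulKn // prime_gt0.
Qed.

Lemma L_iter_divpdiv i j k : L (i + j) k -> L i (iter j divpdiv k).
Proof.
elim: j k => [|j IHj] k; first by rewrite addn0.
by rewrite addnS iterSr => /L_divpdiv; exact: IHj.
Qed.

Lemma L_mul2 i k : L i k -> L i.+1 (2 * k).
Proof.
case=> s [size_s s_pr ->]; exists (2 :: s).
by rewrite /= size_s s_pr big_cons.
Qed.

Lemma L_iter_mul2 i j k : L i k -> L (i + j) (iter j (muln 2) k).
Proof.
elim: j => [|j IHj] Lk; first by rewrite addn0.
by rewrite addnS; apply: L_mul2; exact: IHj.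
Qed.

Theorem corollary2p15 :
  (* (a) *)
  (forall (n : nat) (x : natset -> Prop),
      1 <= n -> is_ultrafilter x -> x (L n) ->
      exists xs : nat -> (natset -> Prop),
        (forall i, 0 < i < n -> is_ultrafilter (xs i) /\ xs i (L i)) /\
        (forall i, i < n ->
           tdiv (if i == 0 then principal 1 else xs i)
                (if i.+1 == n then x else xs i.+1)))
  /\
  (* (b) *)
  (forall (m : nat) (x : natset -> Prop),
      is_ultrafilter x -> x (L m) ->
      exists xs : nat -> (natset -> Prop),
        xs m = x /\
        (forall n, m <= n ->
           [/\ is_ultrafilter (xs n), xs n (L n) & tdiv x (xs n)])).
Proof.
split.
- move=> n x _ x_uf xLn; pose xs i := push (iter (n - i) divpdiv) x.
  have xs_uf i : is_ultrafilter (xs i).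
    by apply: push_ultrafilter => //; apply: iter_in divpdiv_gt0.
  have xsL i : i <= n -> xs i (L i).
    move=> le_in; apply: (uf_mono x_uf xLn) => k.
    by rewrite -{1}(subnKC le_in); exact: L_iter_divpdiv.
  exists xs; split=> [i /andP[_ /ltnW/xsL] | i lt_in]; first by split.
  have -> : (if i.+1 == n then x else xs i.+1) = xs i.+1.
    by rewrite /xs; case: eqP => // ->; rewrite subnn.
  case: eqP => _; first exact: tdiv_principal1.
  have -> : xs i = push divpdiv (xs i.+1) by rewrite /xs -(subnSK lt_in).
  exact: (push_tdiv (xs_uf i.+1) dvdn_divpdiv).
- move=> m x x_uf xLm; pose xs n := push (iter (n - m) (muln 2)) x.
  (* [iter 0 f] is the identity, so [xs m] is [x] up to eta-conversion. *)
  exists xs; split=> [|n le_mn]; first by rewrite /xs subnn.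
  have mul_pos : {homo iter (n - m) (muln 2) : k / 0 < k}.
    by move=> k; rewrite iter_muln muln_gt0 expn_gt0.
  split.
  + exact: push_ultrafilter.
  + apply: (uf_mono x_uf xLm) => k.
    by rewrite -{1}(subnKC le_mn); exact: L_iter_mul2.
  + by apply: tdiv_push => // k; rewrite iter_muln dvdn_mull.
Qed.
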